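(* Let $C\in\mathbb R^{d\times d}$ satisfy Condition A and let $h(t):=\|e^{-Ct}\|_{\mathcal B(\mathbb R^d)}$. For each $m\ge1$ and each $D^{(m)}(0)\in F^{(m)}$, the solution $D^{(m)}(t)$ of $\dot D^{(m)}_\alpha=-\sum_{j,l=1}^d\alpha_jC_{jl}D^{(m)}_{(\alpha^{(j-)})^{(l+)}}$, $\alpha\in S^{(m)}$, satisfies $$\|D^{(m)}(t)\|_{\mathcal F}\le h(t)^m\|D^{(m)}(0)\|_{\mathcal F},\qquad t\ge0.$$ Moreover, $$\sup_{0\ne D^{(m)}(0)\in F^{(m)}}\frac{\|D^{(m)}(t)\|_{\mathcal F}}{\|D^{(m)}(0)\|_{\mathcal F}}=h(t)^m,\qquad t\ge 0.$$
   Context: $C_S=\frac12(C+C^T)$; Condition A: $C_S$ positive semi-definite and no non-trivial $C^T$-invariant subspace of $\ker C_S$. $\|e^{-Ct}\|_{\mathcal B(\mathbb R^d)}$ is the operator norm w.r.t. the Euclidean norm. $F^{(m)}$ is the space of symmetric $m$-tensors over $\mathbb R^d$ with Frobenius norm $\|A\|_{\mathcal F}=(\sum_{i_1,\dots,i_m=1}^dA_{i_1\dots i_m}^2)^{1/2}$. $S^{(m)}=\{\alpha\in\mathbb N_0^d:|\alpha|=m\}$; for $A\in F^{(m)}$, $A_\alpha:=A_{i_1\dots i_m}$ for any index with $\#\{r:i_r=k\}=\alpha_k$ for all $k$. $\alpha^{(l\pm)}_j=\alpha_j$ ($j\ne l$), $\alpha^{(l\pm)}_l=(\alpha_l\pm1)_+$.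 (This tensor ODE is the evolution of the rescaled Hermite coefficients $d_\alpha/\gamma_\alpha$, $\gamma_\alpha=m!/\alpha!$, of solutions of the Fokker–Planck equation $\partial_tf=\mathrm{div}_x(C_S\nabla_xf+Cxf)$.) *)

From HB Require Import structures.
From mathcomp Require Import all_boot all_order all_algebra fingroup perm.
From mathcomp Require Import all_classical all_reals all_analysis.
Set Implicit Arguments. Unset Strict Implicit. Unset Printing Implicit Defensive.
Import Order.TTheory GRing.Theory Num.Theory numFieldNormedType.Exports.
Local Open Scope classical_set_scope.
Local Open Scope ring_scope.

Section Defs.
Variable R : realType.

Definition norm2 d (x : 'cV[R]_d) : R := Num.sqrt (\sum_i (x i 0) ^+ 2).

Definition opnorm d (M : 'M[R]_d) : R :=
  sup [set norm2 (M *m x) | x in [set x : 'cV[R]_d | norm2 x <= 1]].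

Definition expmx d (A : 'M[R]_d) : 'M[R]_d :=
  \matrix_(i, j) limn (series (fun k : nat => (A ^+ k) i j / (k`!)%:R)).

Definition symp d (C : 'M[R]_d) : 'M[R]_d := 2^-1 *: (C + C^T).

Definition psd d (M : 'M[R]_d) : Prop :=
  M^T = M /\ forall x : 'cV[R]_d, 0 <= (x^T *m M *m x) 0 0.

Definition is_subspace d (V : set 'cV[R]_d) : Prop :=
  V 0 /\ (forall x y, V x -> V y -> V (x + y)) /\ (forall (a : R) x, V x -> V (a *: x)).

Definition conditionA d (C : 'M[R]_d) : Prop :=
  psd (symp C) /\
  forall V : set 'cV[R]_d, is_subspace V ->
    (forall x, V x -> symp C *m x = 0) ->
    (forall x, V x -> V (C^T *m x)) ->
    V = [set 0].

Definition tensor d m := {ffun 'I_m -> 'I_d} -> R.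

Definition symmetric_tensor d m (A : tensor d m) : Prop :=
  forall (s : {perm 'I_m}) (i : {ffun 'I_m -> 'I_d}), A [ffun r => i (s r)] = A i.

Definition frob d m (A : tensor d m) : R := Num.sqrt (\sum_i (A i) ^+ 2).

Definition multi_index d := {ffun 'I_d -> nat}.

Definition mi_abs d (a : multi_index d) : nat := \sum_k a k.

Definition mult d m (i : {ffun 'I_m -> 'I_d}) : multi_index d :=
  [ffun k => #|[set r | i r == k]|].

(* A_alpha := A_{i_1...i_m} for any index with multiplicities alpha *)
Definition tensor_at d m (A : tensor d m) (a : multi_index d) : R :=
  if [pick i | mult i == a] is Some i then A i else 0.

(* alpha^(l+) and alpha^(l-) (the latter truncated at 0) *)
Definition mi_plus d (a : multi_index d) (l : 'I_d) : multi_index d :=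
  [ffun k => if k == l then (a k).+1 else a k].
Definition mi_minus d (a : multi_index d) (l : 'I_d) : multi_index d :=
  [ffun k => if k == l then (a k).-1 else a k].

Definition tensor_ode_solution d m (C : 'M[R]_d) (D : R -> tensor d m) : Prop :=
  (forall t, symmetric_tensor (D t)) /\
  forall (a : multi_index d), mi_abs a = m -> forall t : R,
    is_derive t 1 (fun s => tensor_at (D s) a)
      (- \sum_j \sum_l ((a j)%:R * C j l * tensor_at (D t) (mi_plus (mi_minus a j) l))).

End Defs.

From HB Require Import structures.
From mathcomp Require Import all_boot all_order all_algebra fingroup perm.
From mathcomp Require Import all_classical all_reals all_analysis.
Import Order.TTheory GRing.Theory Num.Theory numFieldNormedType.Exports.
Local Open Scope classical_set_scope.
Local Open Scope ring_scope.
Set Implicit Arguments. Unset Strict Implicit. Unset Printing Implicit Defensive.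

(* In index-tuple coordinates the tensor ODE reads [D' = - sum_r C_(r) D], where
   [C_(r)] lets [C] act on the r-th tensor factor. By the product rule
   [D t = (e^(-Ct) (x) ... (x) e^(-Ct)) (D 0)] is a solution, and it is the only
   one: since [C_S] is positive semi-definite, the squared Frobenius distance of
   two solutions is nonincreasing (only this half of Condition A is used).
   Fibrewise, applying [e^(-Ct)] in one factor multiplies the Frobenius norm by at
   most [h t], whence [|D t| <= h t ^ m |D 0|]. The bound is attained in the limit
   by pure tensors [y (x) ... (x) y], for which [|D t| / |D 0| = (|e^(-Ct) y| / |y|)^m]. *)

Section IndexTuples.
Variables d m : nat.
Local Notation idx := {ffun 'I_m -> 'I_d}.

Definition setslot (i : idx) (r : 'I_m) (k : 'I_d) : idx :=
  [ffun s => if s == r then k else i s].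

Lemma setslot_at i r k : setslot i r k r = k.
Proof. by rewrite ffunE eqxx. Qed.

Lemma setslot_ne i r k s : s != r -> setslot i r k s = i s.
Proof. by rewrite ffunE => /negPf ->. Qed.

Lemma setslot_setslot i r k l : setslot (setslot i r k) r l = setslot i r l.
Proof. by apply/ffunP => s; rewrite !ffunE; case: eqP. Qed.

Lemma setslot_id i r : setslot i r (i r) = i.
Proof. by apply/ffunP => s; rewrite !ffunE; case: eqP => [->|]. Qed.

Lemma setslot_eq i r k : (setslot i r k == i) = (i r == k).
Proof. by apply/eqP/eqP => [<-|<-]; [rewrite setslot_at | exact: setslot_id]. Qed.

Lemma sum_fibre (V : nmodType) (G : idx -> V) r (k0 : 'I_d) :
  \sum_i G i = \sum_(j : idx | j r == k0) \sum_k G (setslot j r k).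
Proof.
rewrite (partition_big (fun i : idx => i r) xpredT) //= exchange_big /=.
apply: eq_bigr => k _.
rewrite (reindex_onto (fun j => setslot j r k) (fun i => setslot i r k0)) /=.
  by apply: eq_bigl => j; rewrite setslot_at eqxx setslot_setslot setslot_eq.
by move=> i /eqP <-; rewrite setslot_setslot setslot_id.
Qed.

End IndexTuples.

Section Multiplicities.
Variables d m : nat.
Local Notation idx := {ffun 'I_m -> 'I_d}.

Lemma mult_count (i : idx) k : mult i k = count (fun r => i r == k) (enum 'I_m).
Proof.
rewrite ffunE cardE /enum_mem size_filter (eq_filter (a2 := predT)) // filter_predT.
by apply: eq_count => r /=; apply/idP/idP => [/set_mem|/mem_set].
Qed.

Lemma mult_sum (i : idx) k : mult i k = (\sum_r (i r == k))%N.
Proof. by rewrite mult_count -sum1_count big_enum_cond /= big_mkcond. Qed.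

Lemma mult_perm (i i' : idx) : mult i = mult i' ->
  exists s : 'S_m, i' = [ffun r => i (s r)].
Proof.
move=> E.
have : perm_eq [tuple i' r | r < m] [tuple i r | r < m].
  apply/allP => k _; rewrite /= !count_map; apply/eqP.
  have := congr1 (fun a : multi_index d => a k) E; rewrite !mult_count -enumT.
  by move=> ->.
case/tuple_permP => s Es; exists s; apply/ffunP => r; rewrite ffunE.
have := congr1 (fun x => nth (i r) x r) Es.
by rewrite -!(tnth_nth (i r)) !tnth_mktuple.
Qed.

Lemma mi_abs_mult (i : idx) : mi_abs (mult i) = m.
Proof.
rewrite /mi_abs; under eq_bigr do rewrite mult_sum.
rewrite exchange_big /= -[RHS]card_ord -sum1_card; apply: eq_bigr => r _.
by rewrite (bigD1 (i r)) //= eqxx big1 // => k /negPf; rewrite eq_sym => ->.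
Qed.

Lemma mult_setslot (i : idx) r l :
  mult (setslot i r l) = mi_plus (mi_minus (mult i) (i r)) l.
Proof.
apply/ffunP => k; rewrite [in RHS]ffunE [in RHS]ffunE !mult_sum.
rewrite (bigD1 r) // [in RHS](bigD1 r) //=.
rewrite setslot_at; under eq_bigr => s sr do rewrite setslot_ne //.
by rewrite [l == k]eq_sym [i r == k]eq_sym; case: (k == l); case: (k == i r).
Qed.

Lemma sum_slots (V : nmodType) (i : idx) (g : 'I_d -> V) :
  \sum_r g (i r) = \sum_k g k *+ mult i k.
Proof.
rewrite (partition_big (fun r => i r) xpredT) //=; apply: eq_bigr => k _.
rewrite mult_sum -sumrMnr big_mkcond /=; apply: eq_bigr => r _.
by case: eqP => [->|].
Qed.

Lemma mult_surj (k0 : 'I_d) (a : multi_index d) : mi_abs a = m ->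
  exists i : idx, mult i = a.
Proof.
move=> Ha; pose s := flatten [seq nseq (a k) k | k <- enum 'I_d].
have size_s : size s = m.
  rewrite size_flatten /shape -map_comp (eq_map (g := a)) => [|k /=]; last first.
    by rewrite size_nseq.
  by rewrite sumnE big_map big_enum.
exists [ffun r : 'I_m => nth k0 s r]; apply/ffunP => k; rewrite mult_sum.
have -> : (\sum_r ([ffun r : 'I_m => nth k0 s r] r == k))%N = count_mem k s.
  rewrite -[in RHS](mkseq_nth k0 s) size_s /mkseq count_map -sum1_count big_mkcond /=.
  rewrite (_ : iota 0 m = index_iota 0 m) ?big_mkord ?[in RHS]big_mkcond; last first.
    by rewrite /index_iota subn0.
  by apply: eq_bigr => r _; rewrite ffunE /=; case: (_ == k).
rewrite count_flatten -map_comp (eq_map (g := fun j => ((j == k) * a j)%N)) => [|j /=].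
  rewrite sumnE big_map big_enum /= (bigD1 k) //= eqxx mul1n big1 ?addn0 //.
  by move=> j /negPf ->.
by rewrite count_nseq.
Qed.

End Multiplicities.

Section SlotMaps.
Variable R : comPzRingType.
Variables d m : nat.
Local Notation idx := {ffun 'I_m -> 'I_d}.

(* [slot_mx r M] is [1 (x) ... (x) M (x) ... (x) 1] with [M] in factor [r], and
   [tensor_map f] is [f 0 (x) ... (x) f (m-1)]. *)
Definition slot_mx (r : 'I_m) (M : 'M[R]_d) (B : idx -> R) : idx -> R :=
  fun i => \sum_l M (i r) l * B (setslot i r l).

Definition tensor_map (f : 'I_m -> 'M[R]_d) (A : idx -> R) : idx -> R :=
  fun i => \sum_(k : idx) (\prod_r f r (i r) (k r)) * A k.

Definition pure_tensor (y : 'cV[R]_d) : idx -> R := fun i => \prod_r y (i r) 0.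

Lemma slot_mxB r M (X Y : idx -> R) i :
  slot_mx r M (fun j => X j - Y j) i = slot_mx r M X i - slot_mx r M Y i.
Proof. by rewrite /slot_mx -sumrB; apply: eq_bigr => l _; rewrite mulrBr. Qed.

Lemma slot_mx_tensor_map r N f A :
  slot_mx r N (tensor_map f A) =
  tensor_map (fun s => if s == r then N *m f s else f s) A.
Proof.
apply: funext => i; rewrite /slot_mx /tensor_map.
under eq_bigr do rewrite mulr_sumr.
rewrite exchange_big /=; apply: eq_bigr => k _.
rewrite (bigD1 r) //= eqxx mxE !mulr_suml; apply: eq_bigr => l _.
rewrite (bigD1 r) //= setslot_at -!mulrA; congr (_ * (_ * _)); congr (_ * _).
by apply: eq_bigr => s /negPf sr; rewrite sr setslot_ne ?sr.
Qed.

Lemma tensor_map1 A : tensor_map (fun _ => 1%:M) A = A.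
Proof.
apply: funext => i; rewrite /tensor_map (bigD1 i) //= [X in _ + X]big1 ?addr0 => [|k ki].
  by rewrite big1 ?mul1r // => r _; rewrite mxE eqxx.
have [r ri] : exists r, i r != k r.
  apply/existsP; apply: contraR ki => /existsPn ik.
  by apply/eqP/ffunP => r; apply/esym/eqP/negPn.
by rewrite (bigD1 r) //= mxE (negPf ri) !mul0r.
Qed.

Lemma tensor_map_pure M y : tensor_map (fun _ => M) (pure_tensor y) = pure_tensor (M *m y).
Proof.
apply: funext => i; rewrite /tensor_map /pure_tensor.
rewrite (eq_bigr (fun k : idx => \prod_r (M (i r) (k r) * y (k r) 0))) => [|k _]; last first.
  by rewrite big_split.
rewrite -(bigA_distr_bigA (fun r l => M (i r) l * y l 0)) /=.
by apply: eq_bigr => r _; rewrite mxE.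
Qed.

End SlotMaps.

Section SymmetricTensors.
Variable R : realType.
Variables d m : nat.
Local Notation idx := {ffun 'I_m -> 'I_d}.

Lemma tensor_at_mult (A : tensor R d m) (i : idx) :
  symmetric_tensor A -> tensor_at A (mult i) = A i.
Proof.
rewrite /tensor_at => sA; case: pickP => [j /eqP /mult_perm [s ->]|/(_ i)].
  by rewrite sA.
by rewrite eqxx.
Qed.

Lemma pure_tensor_sym (y : 'cV[R]_d) : symmetric_tensor (pure_tensor (m := m) y).
Proof.
move=> s i; rewrite /pure_tensor [RHS](reindex_inj (@perm_inj _ s)) /=.
by apply: eq_bigr => r _; rewrite ffunE.
Qed.

Lemma tensor_map_sym M (A : tensor R d m) :
  symmetric_tensor A -> symmetric_tensor (tensor_map (fun _ => M) A).
Proof.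
move=> sA s i; rewrite /tensor_map.
have perm_slots_inj : injective (fun k : idx => [ffun r => k (s r)]).
  move=> k1 k2 /ffunP E; apply/ffunP => r.
  by have := E (s^-1 r)%g; rewrite !ffunE permKV.
rewrite (reindex_inj perm_slots_inj) /=; apply: eq_bigr => k _; rewrite sA.
rewrite [in RHS](reindex_inj (@perm_inj _ s)) /=.
by congr (_ * _); apply: eq_bigr => r _; rewrite !ffunE.
Qed.

End SymmetricTensors.

Lemma sumr_sqr_ge0 (R : realDomainType) (I : finType) (x : I -> R) :
  0 <= \sum_i x i ^+ 2.
Proof. by apply: sumr_ge0 => i _; apply: sqr_ge0. Qed.

Lemma sumr_sqr_eq0 (R : realDomainType) (I : finType) (x : I -> R) :
  \sum_i x i ^+ 2 = 0 -> forall i, x i = 0.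
Proof.
move=> /psumr_eq0P x0 i; apply/eqP; rewrite -sqrf_eq0; apply/eqP.
by apply: x0 => // j _; apply: sqr_ge0.
Qed.

Lemma sqrtrX (R : rcfType) (x : R) n : 0 <= x -> Num.sqrt (x ^+ n) = Num.sqrt x ^+ n.
Proof.
by move=> x0; elim: n => [|n IH]; rewrite ?sqrtr1 // !exprS sqrtrM ?IH // exprn_ge0.
Qed.

Section EuclideanNorm.
Variables (R : realType) (d : nat).
Implicit Types (x : 'cV[R]_d) (M : 'M[R]_d).

Lemma norm2_ge0 x : 0 <= norm2 x.
Proof. exact: sqrtr_ge0. Qed.

Lemma norm2_sqr x : norm2 x ^+ 2 = \sum_i x i 0 ^+ 2.
Proof. by rewrite sqr_sqrtr // sumr_sqr_ge0. Qed.

Lemma norm2_eq0 x : (norm2 x == 0) = (x == 0).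
Proof.
apply/idP/eqP => [|->]; last by rewrite /norm2 big1 ?sqrtr0 // => i _; rewrite mxE expr0n.
rewrite -sqrf_eq0 norm2_sqr => /eqP /sumr_sqr_eq0 x0.
by apply/matrixP => i j; rewrite (ord1 j) mxE x0.
Qed.

Lemma norm20 : norm2 (0 : 'cV[R]_d) = 0.
Proof. by apply/eqP; rewrite norm2_eq0. Qed.

Lemma norm2Z (a : R) x : norm2 (a *: x) = `|a| * norm2 x.
Proof.
rewrite /norm2 -sqrtr_sqr -sqrtrM ?sqr_ge0 // mulr_sumr.
by congr Num.sqrt; apply: eq_bigr => i _; rewrite mxE exprMn.
Qed.

Lemma norm2_le_sum_abs x : norm2 x <= \sum_i `|x i 0|.
Proof.
have s0 : 0 <= \sum_i `|x i 0| by apply: sumr_ge0.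
rewrite -(ger0_norm s0) -sqrtr_sqr ler_sqrt ?sqr_ge0 // expr2 mulr_suml.
apply: ler_sum => i _; rewrite -real_normK ?num_real // expr2 ler_wpM2l //.
by rewrite (bigD1 i) //= lerDl sumr_ge0.
Qed.

Lemma abs_le_norm2 x i : `|x i 0| <= norm2 x.
Proof.
rewrite -sqrtr_sqr ler_sqrt ?sumr_sqr_ge0 //.
by rewrite (bigD1 i) //= lerDl sumr_ge0 // => j _; apply: sqr_ge0.
Qed.

Definition mx_abs_sum M : R := \sum_i \sum_j `|M i j|.

Lemma norm2_mulmx_ball_le M x : norm2 x <= 1 -> norm2 (M *m x) <= mx_abs_sum M.
Proof.
move=> x1; apply: le_trans (norm2_le_sum_abs _) _; apply: ler_sum => i _.
rewrite mxE; apply: le_trans (ler_norm_sum _ _ _) _; apply: ler_sum => j _.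
by rewrite normrM ler_piMr // (le_trans (abs_le_norm2 _ _)).
Qed.

Local Notation ball_image M := [set norm2 (M *m x) | x in [set x | norm2 x <= 1]].

Lemma has_sup_ball_image M : has_sup (ball_image M).
Proof.
split; first by exists (norm2 (M *m 0)), 0; rewrite //= norm20 ler01.
by exists (mx_abs_sum M) => _ [x /= x1 <-]; apply: norm2_mulmx_ball_le.
Qed.

Lemma opnorm_ub M x : norm2 x <= 1 -> norm2 (M *m x) <= opnorm M.
Proof. by move=> x1; apply: (sup_upper_bound (has_sup_ball_image M)); exists x. Qed.

Lemma opnorm_ge0 M : 0 <= opnorm M.
Proof. by rewrite -(norm20) -(mulmx0 _ M) opnorm_ub // norm20 ler01. Qed.

Lemma norm2_mulmx_le M x : norm2 (M *m x) <= opnorm M * norm2 x.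
Proof.
have [/eqP|nx0] := eqVneq (norm2 x) 0.
  by rewrite norm2_eq0 => /eqP ->; rewrite mulmx0 !norm20 mulr0.
have nx_gt0 : 0 < norm2 x by rewrite lt_def nx0 norm2_ge0.
have := @opnorm_ub M ((norm2 x)^-1 *: x).
rewrite -scalemxAr !norm2Z ger0_norm ?invr_ge0 ?norm2_ge0 // mulVf // lexx.
by rewrite ler_pdivrMl // mulrC => ->.
Qed.

Lemma opnorm_le M (c : R) :
  (forall x, norm2 x <= 1 -> norm2 (M *m x) <= c) -> opnorm M <= c.
Proof.
move=> Mc; apply: ge_sup => [|_ [x /= x1 <-]]; last exact: Mc.
exact: (has_sup_ball_image M).1.
Qed.

(* Compare with the [m]-th root [c `^ m%:R^-1]. *)
Lemma opnorm_expn_le M m (c : R) : (0 < m)%N -> 0 <= c ->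
  (forall x, norm2 x <= 1 -> norm2 (M *m x) ^+ m <= c) -> opnorm M ^+ m <= c.
Proof.
move=> m0 c0 Mc; have root_c : (c `^ m%:R^-1) ^+ m = c.
  by rewrite -powR_mulrn ?powR_ge0 // -powRrM mulVf ?pnatr_eq0 -?lt0n ?powRr1.
rewrite -root_c lerXn2r ?nnegrE ?opnorm_ge0 ?powR_ge0 //.
apply: opnorm_le => x x1.
by rewrite -(ler_pXn2r m0) ?nnegrE ?norm2_ge0 ?powR_ge0 // root_c Mc.
Qed.

End EuclideanNorm.

Section Frobenius.
Variables (R : realType) (d m : nat).
Implicit Types (A B : tensor R d m) (M : 'M[R]_d).

Lemma frob_ge0 A : 0 <= frob A.
Proof. exact: sqrtr_ge0. Qed.

Lemma frob_eq0 A : frob A = 0 -> A = (fun _ => 0).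
Proof.
move=> /eqP; rewrite sqrtr_eq0 => A0; apply: funext; apply: sumr_sqr_eq0.
by apply/eqP; rewrite eq_le A0 sumr_sqr_ge0.
Qed.

Lemma frob_pure_tensor (y : 'cV[R]_d) : frob (pure_tensor (m := m) y) = norm2 y ^+ m.
Proof.
rewrite /frob /norm2 -sqrtrX ?sumr_sqr_ge0 //; congr Num.sqrt.
under eq_bigr do rewrite -prodrXl.
by rewrite -(bigA_distr_bigA (fun (r : 'I_m) l => y l 0 ^+ 2)) /= prodr_const card_ord.
Qed.

(* [k0] only labels the representative fibres in [sum_fibre]. *)
Variable k0 : 'I_d.

(* On each fibre of slot [r], [slot_mx r M] is [M] acting on a vector of [R^d]. *)
Lemma frob_slot_mx_le r M B : frob (slot_mx r M B) <= opnorm M * frob B.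
Proof.
have M_ge0 := opnorm_ge0 M.
rewrite /frob -(ger0_norm M_ge0) -sqrtr_sqr -sqrtrM ?sqr_ge0 //.
rewrite ler_sqrt ?mulr_ge0 ?sqr_ge0 ?sumr_sqr_ge0 //.
rewrite (sum_fibre (fun i => slot_mx r M B i ^+ 2) r k0).
rewrite (sum_fibre (fun i => B i ^+ 2) r k0) mulr_sumr.
apply: ler_sum => j _; pose x : 'cV[R]_d := \col_l B (setslot j r l).
have -> : \sum_k slot_mx r M B (setslot j r k) ^+ 2 = norm2 (M *m x) ^+ 2.
  rewrite norm2_sqr; apply: eq_bigr => k _; rewrite /slot_mx !mxE setslot_at.
  by congr (_ ^+ 2); apply: eq_bigr => l _; rewrite setslot_setslot mxE.
have -> : \sum_l B (setslot j r l) ^+ 2 = norm2 x ^+ 2.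
  by rewrite norm2_sqr; apply: eq_bigr => l _; rewrite mxE.
have x_ge0 := norm2_ge0 x.
by rewrite -exprMn lerXn2r ?nnegrE ?norm2_ge0 ?mulr_ge0 //; apply: norm2_mulmx_le.
Qed.

Lemma frob_tensor_map_le M A : frob (tensor_map (fun _ => M) A) <= opnorm M ^+ m * frob A.
Proof.
pose first_slots n (r : 'I_m) := if (r < n)%N then M else 1%:M.
suff /(_ m (leqnn m)) : forall n, (n <= m)%N ->
    frob (tensor_map (first_slots n) A) <= opnorm M ^+ n * frob A.
  rewrite (_ : first_slots m = fun _ => M) //.
  by apply: funext => r; rewrite /first_slots ltn_ord.
elim=> [_|n IH nm].
  by rewrite (_ : first_slots 0%N = fun _ => 1%:M) ?tensor_map1 ?mul1r.
pose r0 : 'I_m := Ordinal nm.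
have -> : tensor_map (first_slots n.+1) A = slot_mx r0 M (tensor_map (first_slots n) A).
  rewrite slot_mx_tensor_map; congr tensor_map; apply: funext => r; rewrite /first_slots.
  have [->|rr0] := eqVneq r r0; first by rewrite ltnn ltnSn mulmx1.
  rewrite ltnS leq_eqVlt; case: eqP => [rn|//].
  by case/eqP: rr0; apply: val_inj.
apply: le_trans (frob_slot_mx_le _ _ _) _.
by rewrite exprS -mulrA ler_wpM2l ?opnorm_ge0 // IH // ltnW.
Qed.

End Frobenius.

Section PowerSeries.
Variable R : realType.

Lemma pseries_diffs_le (a : R^nat) B N :
  (forall k, `|a k| <= B * (N ^+ k / k`!%:R)) ->
  forall k, `|pseries_diffs a k| <= (B * N) * (N ^+ k / k`!%:R).
Proof.
move=> aB k; rewrite /pseries_diffs normrM normr_nat.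
apply: le_trans (ler_wpM2l (ler0n _ _) (aB k.+1)) _.
rewrite factS natrM invfM exprS le_eqVlt; apply/orP; left; apply/eqP.
rewrite mulrCA -[B * N * _]mulrA; congr (B * _).
by rewrite -!mulrA mulrCA; congr (N * _); rewrite mulrCA mulVKf ?pnatr_eq0.
Qed.

(* Domination by [B e^(N |x|)]. *)
Lemma is_cvg_pseries_le (a : R^nat) B N x : 0 <= N ->
  (forall k, `|a k| <= B * (N ^+ k / k`!%:R)) -> cvgn (pseries a x).
Proof.
move=> N0 aB; have B0 : 0 <= B.
  by have := aB 0%N; rewrite expr0 fact0 invr1 !mulr1; apply: le_trans.
apply: normed_cvg; rewrite /normed_series_of /=.
apply: (@series_le_cvg _ _ (B *: exp_coeff (N * `|x|))).
- by move=> k.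
- by move=> k; rewrite /= mulr_ge0 // exp_coeff_ge0 // mulr_ge0.
- move=> k; rewrite /= /exp_coeff /= normrM normrX.
  apply: le_trans (ler_wpM2r (exprn_ge0 _ (normr_ge0 x)) (aB k)) _.
  rewrite [X in _ <= X]/GRing.scale /= exprMn.
  by rewrite -!mulrA [_^-1 * _]mulrC.
- exact/is_cvg_seriesZ/is_cvg_series_exp_coeff.
Qed.

Lemma lim_series_sum (I : Type) (s : seq I) (u : I -> R^nat) :
  (forall p, cvgn (series (u p))) ->
  limn (series (fun k => \sum_(p <- s) u p k)) = \sum_(p <- s) limn (series (u p)).
Proof.
move=> cu; suff [] : cvgn (series (fun k => \sum_(p <- s) u p k)) /\
  limn (series (fun k => \sum_(p <- s) u p k)) = \sum_(p <- s) limn (series (u p)) by [].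
elim: s => [|p s [cs IH]].
  rewrite big_nil (_ : series _ = cst 0); first by split; [apply: is_cvg_cst | apply: lim_cst].
  by apply: funext => n; rewrite /series /= big1 // => k _; rewrite big_nil.
rewrite (_ : (fun k => _) = u p + fun k => \sum_(q <- s) u q k); last first.
  by apply: funext => k; rewrite big_cons.
by split; [apply: is_cvg_seriesD | rewrite lim_seriesD // big_cons IH].
Qed.

End PowerSeries.

Section MatrixExponential.
Variables (R : realType) (d : nat) (M : 'M[R]_d).

Definition expmx_coef (i j : 'I_d) : R^nat := fun k => (M ^+ k) i j / k`!%:R.

Lemma mx_abs_sum_ge0 : 0 <= mx_abs_sum M.
Proof. by do 2!apply: sumr_ge0 => ? _. Qed.

Lemma exprmx_entry_le k i j : `|(M ^+ k) i j| <= mx_abs_sum M ^+ k.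
Proof.
elim: k i j => [|k IH] i j; first by rewrite mxE; case: eqP; rewrite ?normr1 ?normr0.
rewrite exprS -mulmxE mxE; apply: le_trans (ler_norm_sum _ _ _) _.
apply: (@le_trans _ _ (\sum_l `|M i l| * mx_abs_sum M ^+ k)).
  by apply: ler_sum => l _; rewrite normrM ler_wpM2l.
rewrite -mulr_suml exprS ler_wpM2r ?exprn_ge0 ?mx_abs_sum_ge0 //.
by rewrite [X in _ <= X](bigD1 i) //= lerDl; do 2!apply: sumr_ge0 => ? _.
Qed.

Lemma expmx_coef_le i j k : `|expmx_coef i j k| <= 1 * (mx_abs_sum M ^+ k / k`!%:R).
Proof.
by rewrite mul1r normrM normfV normr_nat ler_wpM2r ?invr_ge0 ?exprmx_entry_le.
Qed.

Lemma is_cvg_expmx_coef i j x : cvgn (pseries (expmx_coef i j) x).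
Proof. exact: is_cvg_pseries_le mx_abs_sum_ge0 (@expmx_coef_le i j). Qed.

(* [exprZn] only applies to square matrices of size [n.+1]. *)
Lemma exprmxZ (a : R) k : (a *: M) ^+ k = a ^+ k *: M ^+ k.
Proof.
elim: k => [|k IH]; first by rewrite !expr0 scale1r.
by rewrite !exprS IH -!mulmxE -scalemxAl -scalemxAr scalerA.
Qed.

Lemma expmxZE (t : R) i j : expmx (t *: M) i j = limn (pseries (expmx_coef i j) t).
Proof.
rewrite mxE /pseries; congr (limn (series _)); apply: funext => k /=.
by rewrite /expmx_coef exprmxZ mxE -mulrA mulrC.
Qed.

Lemma pseries_diffs_expmx_coef i j (t : R) k :
  pseries_diffs (expmx_coef i j) k * t ^+ k = \sum_l M i l * (expmx_coef l j k * t ^+ k).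
Proof.
rewrite /pseries_diffs /expmx_coef factS natrM invfM exprS -mulmxE mxE.
rewrite mulrCA mulVKf ?pnatr_eq0 // !mulr_suml.
by apply: eq_bigr => l _; rewrite !mulrA.
Qed.

Lemma is_derive_expmx (t : R) i j :
  is_derive t 1 (fun s => expmx (s *: M) i j) ((M *m expmx (t *: M)) i j).
Proof.
(* The [n]-th derived coefficients are dominated by [mx_abs_sum M ^+ n] times those of
   [e^(mx_abs_sum M)]. *)
have cvg_diffs n x : cvgn (pseries (iter n (@pseries_diffs R) (expmx_coef i j)) x).
  apply: (is_cvg_pseries_le (B := mx_abs_sum M ^+ n) (x := x) mx_abs_sum_ge0) => k.
  elim: n k => [|n IH] k; first by rewrite expr0 expmx_coef_le.
  by rewrite iterS exprSr; apply: pseries_diffs_le.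
rewrite (_ : (fun s => _) = fun s => limn (pseries (expmx_coef i j) s)); last first.
  by apply: funext => s; rewrite expmxZE.
suff -> : (M *m expmx (t *: M)) i j = limn (pseries (pseries_diffs (expmx_coef i j)) t).
  apply: (pseries_snd_diffs (K := `|t| + 1)).
  - exact: (cvg_diffs 0%N).
  - exact: (cvg_diffs 1%N).
  - exact: (cvg_diffs 2%N).
  - by rewrite [X in _ < X]ger0_norm ?ltrDl // addr_ge0.
rewrite /pseries.
rewrite (_ : (fun k => _) = fun k => \sum_l (M i l *: fun k => expmx_coef l j k * t ^+ k) k).
  rewrite lim_series_sum => [|l]; last exact/is_cvg_seriesZ/is_cvg_expmx_coef.
  rewrite mxE; apply: eq_bigr => l _.
  by rewrite lim_seriesZ ?expmxZE //; apply: is_cvg_expmx_coef.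
by apply: funext => k; rewrite pseries_diffs_expmx_coef.
Qed.

End MatrixExponential.

Lemma expmx0 (R : realType) d : expmx (0 : 'M[R]_d) = 1%:M.
Proof.
apply/matrixP => i j; rewrite -(scale0r (0 : 'M[R]_d)) expmxZE.
apply: lim_near_cst => //; near=> n; rewrite -[n]prednK; last by near: n.
rewrite /pseries /series /= big_nat_recl // big1 => [|k _]; last by rewrite expr0n mulr0.
by rewrite /expmx_coef !expr0 mulr1 fact0 invr1 mulr1 addr0.
Unshelve. all: by end_near.
Qed.

Section Derivatives.
Variable R : realType.

Lemma is_derive_big_sum (I : Type) (s : seq I) (f : I -> R -> R) (df : I -> R) (t : R) :
  (forall p, is_derive t 1 (f p) (df p)) ->
  is_derive t 1 (fun x => \sum_(p <- s) f p x) (\sum_(p <- s) df p).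
Proof.
move=> fdf; elim: s => [|p s IH].
  rewrite big_nil (_ : (fun _ => _) = cst 0); first exact: is_derive_cst.
  by apply: funext => x; rewrite big_nil.
rewrite big_cons (_ : (fun x => _) = f p + fun x => \sum_(q <- s) f q x).
  exact: is_deriveD.
by apply: funext => x; rewrite big_cons.
Qed.

Lemma is_derive_big_prod (I : eqType) (s : seq I) (f : I -> R -> R) (df : I -> R) (t : R) :
  uniq s -> (forall p, is_derive t 1 (f p) (df p)) ->
  is_derive t 1 (fun x => \prod_(p <- s) f p x)
    (\sum_(p <- s) df p * \prod_(q <- s | q != p) f q t).
Proof.
move=> + fdf; elim: s => [_|p s IH /andP[ps us]].
  rewrite big_nil (_ : (fun _ => _) = cst 1); first exact: is_derive_cst.
  by apply: funext => x; rewrite big_nil.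
rewrite (_ : (fun x => _) = f p * fun x => \prod_(q <- s) f q x); last first.
  by apply: funext => x; rewrite big_cons.
have prod_p : \prod_(q <- p :: s | q != p) f q t = \prod_(q <- s) f q t.
  rewrite big_cons eqxx /= big_seq_cond [RHS]big_seq_cond; apply: eq_bigl => q.
  by rewrite andbT; case: (boolP (q \in s)) => //= qs; apply: contraNneq ps => <-.
have prod_q q : q \in s ->
    \prod_(q' <- p :: s | q' != q) f q' t = f p t * \prod_(q' <- s | q' != q) f q' t.
  by move=> qs; rewrite big_cons (_ : p != q) //; apply: contraNneq ps => ->.
apply: is_derive_eq; first exact: is_deriveM (fdf p) (IH us).
rewrite big_cons prod_p addrC; congr (_ + _); first by rewrite /GRing.scale /= mulrC.
rewrite /GRing.scale /= mulr_sumr; apply: eq_big_seq => q qs.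
by rewrite prod_q // mulrCA.
Qed.

Lemma is_derive_mulr_const (f : R -> R) (df c t : R) :
  is_derive t 1 f df -> is_derive t 1 (fun x => f x * c) (df * c).
Proof.
move=> fdf; rewrite (_ : (fun x => _) = c \*: f) ?[df * c]mulrC; first exact: is_deriveZ.
by apply: funext => x; rewrite /= mulrC.
Qed.

End Derivatives.

Section TensorODE.
Variables (R : realType) (d m : nat) (C : 'M[R]_d).
Local Notation idx := {ffun 'I_m -> 'I_d}.

(* The tensor ODE reads [D' = - drift D], see [drift_mult]. *)
Definition drift (X : idx -> R) : idx -> R := fun i => \sum_r slot_mx r C X i.

Definition solves_drift (D : R -> idx -> R) : Prop :=
  forall (i : idx) (t : R), is_derive t 1 (fun s => D s i) (- drift (D t) i).

Lemma drift_mult (X : tensor R d m) i : symmetric_tensor X ->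
  drift X i = \sum_j \sum_l ((mult i j)%:R * C j l * tensor_at X (mi_plus (mi_minus (mult i) j) l)).
Proof.
move=> sX; rewrite /drift /slot_mx.
under eq_bigr => r _ do under eq_bigr => l _ do rewrite -(tensor_at_mult _ sX) mult_setslot.
rewrite (sum_slots i (fun j => \sum_l C j l * tensor_at X (mi_plus (mi_minus (mult i) j) l))).
by apply: eq_bigr => j _; rewrite -[LHS]mulr_natl mulr_sumr; apply: eq_bigr => l _; rewrite mulrA.
Qed.

Lemma tensor_ode_solves_drift D : tensor_ode_solution C D -> solves_drift D.
Proof.
move=> [sD D'] i t; have := D' (mult i) (mi_abs_mult i) t.
rewrite -drift_mult // (_ : (fun s => _) = fun s => D s i) //.
by apply: funext => s; rewrite tensor_at_mult.
Qed.

Lemma solves_drift_tensor_ode (k0 : 'I_d) D :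
  (forall t, symmetric_tensor (D t)) -> solves_drift D -> tensor_ode_solution C D.
Proof.
move=> sD D'; split => // a /(mult_surj k0) [i <-] t.
rewrite -drift_mult // (_ : (fun s => _) = fun s => D s i) //.
by apply: funext => s; rewrite tensor_at_mult.
Qed.

Local Notation E t := (expmx (- (t *: C))).

Lemma is_derive_expmxN (t : R) i j : is_derive t 1 (fun s => E s i j) (- (C *m E t) i j).
Proof.
rewrite (_ : - _ = ((- C) *m expmx (t *: - C)) i j); last first.
  by rewrite scalerN mulNmx [RHS]mxE.
by under eq_fun do rewrite -scalerN; apply: is_derive_expmx.
Qed.

(* Product rule: differentiating the factors of [E t (x) ... (x) E t] one at a time. *)
Lemma solves_drift_expmx (A : idx -> R) : solves_drift (fun s => tensor_map (fun _ => E s) A).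
Proof.
move=> i t; rewrite /drift /tensor_map.
apply: is_derive_eq.
  apply: is_derive_big_sum => k; apply: is_derive_mulr_const.
  apply: (is_derive_big_prod (f := fun r s => E s (i r) (k r))) => [|r].
    exact: index_enum_uniq.
  exact: is_derive_expmxN.
rewrite -sumrN; under [RHS]eq_bigr do rewrite slot_mx_tensor_map -sumrN.
rewrite [RHS]exchange_big /=; apply: eq_bigr => k _.
rewrite mulr_suml; apply: eq_bigr => r _; rewrite [in RHS](bigD1 r) //= eqxx -!mulNr.
by congr (_ * _ * _); apply: eq_bigr => s /negPf ->.
Qed.

End TensorODE.

Lemma quad_formE (R : comPzRingType) d (A : 'M[R]_d) (x : 'cV[R]_d) :
  (x^T *m A *m x) 0 0 = \sum_k x k 0 * \sum_l A k l * x l 0.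
Proof.
rewrite mxE; under eq_bigr do rewrite mxE mulr_suml.
rewrite exchange_big /=; apply: eq_bigr => k _; rewrite mulr_sumr; apply: eq_bigr => l _.
by rewrite mxE mulrA.
Qed.

Lemma quad_form_symp (R : realType) d (C : 'M[R]_d) (x : 'cV[R]_d) :
  (x^T *m symp C *m x) 0 0 = (x^T *m C *m x) 0 0.
Proof.
have qT : (x^T *m C^T *m x) 0 0 = (x^T *m C *m x) 0 0.
  by rewrite (_ : _ *m x = (x^T *m C *m x)^T) ?mxE // !trmx_mul trmxK mulmxA.
rewrite /symp -scalemxAr -scalemxAl mulmxDr mulmxDl [LHS]mxE [X in _ * X]mxE qT.
set q := (x^T *m C *m x) 0 0.
by rewrite -mulr2n -(mulr_natl q) mulrA mulVf ?mul1r // pnatr_eq0.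
Qed.

Lemma psd_quad_form_ge0 (R : realType) d (C : 'M[R]_d) (x : 'cV[R]_d) :
  psd (symp C) -> 0 <= (x^T *m C *m x) 0 0.
Proof. by case=> _ /(_ x); rewrite quad_form_symp. Qed.

Section Dissipation.
Variables (R : realType) (d m : nat) (C : 'M[R]_d) (k0 : 'I_d).
Hypothesis psdC : psd (symp C).
Local Notation idx := {ffun 'I_m -> 'I_d}.

(* On each fibre of slot [r], [<Z, slot_mx r C Z>] is the quadratic form of [C]. *)
Lemma drift_form_ge0 (Z : idx -> R) : 0 <= \sum_i Z i * drift C Z i.
Proof.
rewrite /drift; under eq_bigr do rewrite mulr_sumr.
rewrite exchange_big /=; apply: sumr_ge0 => r _.
rewrite (sum_fibre (fun i => Z i * slot_mx r C Z i) r k0); apply: sumr_ge0 => j _.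
pose x : 'cV[R]_d := \col_k Z (setslot j r k).
have -> : \sum_k Z (setslot j r k) * slot_mx r C Z (setslot j r k) = (x^T *m C *m x) 0 0.
  rewrite quad_formE; apply: eq_bigr => k _; rewrite /slot_mx !mxE setslot_at.
  by congr (_ * _); apply: eq_bigr => l _; rewrite setslot_setslot mxE.
exact: psd_quad_form_ge0.
Qed.

(* The squared Frobenius distance of two solutions is nonincreasing. *)
Lemma solves_drift_unique (D1 D2 : R -> idx -> R) t :
  solves_drift C D1 -> solves_drift C D2 -> D1 0 = D2 0 -> 0 <= t -> D1 t = D2 t.
Proof.
move=> D1' D2' D12 t0; pose Z s i := D1 s i - D2 s i.
have Z' i (x : R) : is_derive x 1 (fun s => Z s i) (- drift C (Z x) i).
  apply: is_derive_eq; first exact: is_deriveB (D1' i x) (D2' i x).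
  rewrite opprK addrC -opprB /drift -sumrB; congr -%R.
  by apply: eq_bigr => r _; rewrite slot_mxB.
pose e s := \sum_i Z s i * Z s i.
have e' (x : R) : is_derive x 1 e (- (\sum_i Z x i * drift C (Z x) i) *+ 2).
  apply: is_derive_eq; first by apply: is_derive_big_sum => i; exact: is_deriveM.
  rewrite -sumrN -sumrMnl; apply: eq_bigr => i _.
  by rewrite /GRing.scale /= mulrN mulr2n.
have : e t <= e 0.
  apply: (@ler0_derive1_nincry R e 0) => [x _|x _||//|//].
  - by apply: ex_derive; exact: e'.
  - rewrite derive1E (derive_val (is_derive := e' x)) mulNrn oppr_le0.
    by rewrite mulrn_wge0 ?drift_form_ge0.
  - by apply: derivable_within_continuous => x _; apply: ex_derive; exact: e'.
rewrite {2}/e big1 => [et0|i _]; last by rewrite /Z D12 subrr mul0r.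
have Zt0 : forall i, Z t i = 0.
  apply: sumr_sqr_eq0; apply/eqP; rewrite eq_le sumr_sqr_ge0 andbT.
  by under eq_bigr do rewrite expr2.
by apply: funext => i; apply/eqP; rewrite -subr_eq0; apply/eqP; exact: Zt0.
Qed.

End Dissipation.

Section Propagator.
Variables (R : realType) (d m : nat) (C : 'M[R]_d) (k0 : 'I_d).
Hypothesis psdC : psd (symp C).
Local Notation E t := (expmx (- (t *: C))).

Let E0 : E 0 = 1%:M. Proof. by rewrite scale0r oppr0 expmx0. Qed.

Lemma tensor_ode_solutionE (D : R -> tensor R d m) t :
  tensor_ode_solution C D -> 0 <= t -> D t = tensor_map (fun _ => E t) (D 0).
Proof.
move=> HD t0.
have := solves_drift_unique k0 psdC (tensor_ode_solves_drift HD) (solves_drift_expmx C (D 0)).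
by apply => //; rewrite E0 tensor_map1.
Qed.

Lemma frob_tensor_ode_le (D : R -> tensor R d m) t :
  tensor_ode_solution C D -> 0 <= t -> frob (D t) <= opnorm (E t) ^+ m * frob (D 0).
Proof. by move=> HD t0; rewrite (tensor_ode_solutionE HD t0) frob_tensor_map_le. Qed.

Definition pure_solution (y : 'cV[R]_d) : R -> tensor R d m :=
  fun s => tensor_map (fun _ => E s) (pure_tensor y).

Lemma pure_solutionE y t : pure_solution y t = pure_tensor (E t *m y).
Proof. exact: tensor_map_pure. Qed.

Lemma pure_solution_tensor_ode y : tensor_ode_solution C (pure_solution y).
Proof.
apply: (solves_drift_tensor_ode k0) => [s|]; last exact: solves_drift_expmx.
exact/tensor_map_sym/pure_tensor_sym.
Qed.

Lemma frob_pure_solution y t : frob (pure_solution y t) = norm2 (E t *m y) ^+ m.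
Proof. by rewrite pure_solutionE frob_pure_tensor. Qed.

Hypothesis m_gt0 : (0 < m)%N.

(* The pure tensors [y (x) ... (x) y] realise every ratio [(|E t y| / |y|)^m]. *)
Lemma sup_tensor_ode_ratio t : 0 <= t ->
  sup [set frob (D t) / frob (D 0) | D in
         [set D : R -> tensor R d m | tensor_ode_solution C D /\ D 0 <> (fun _ => 0)]]
  = opnorm (E t) ^+ m.
Proof.
move=> t0; set S := [set _ | _ in _].
have S_ge0 r : S r -> 0 <= r by move=> [D _ <-]; rewrite divr_ge0 ?frob_ge0.
have S_ub : ubound S (opnorm (E t) ^+ m).
  move=> _ [D [HD D0] <-]; rewrite ler_pdivrMr ?frob_tensor_ode_le //.
  by rewrite lt_def frob_ge0 andbT; apply/eqP => /frob_eq0.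
have pure_in_S y : y != 0 -> S (norm2 (E t *m y) ^+ m / norm2 y ^+ m).
  move=> y0; exists (pure_solution y); last by rewrite !frob_pure_solution E0 mul1mx.
  split; first exact: pure_solution_tensor_ode.
  move=> /(congr1 (@frob R d m)); rewrite frob_pure_solution E0 mul1mx.
  rewrite /frob big1 ?expr0n ?sqrtr0 // => /eqP; rewrite expf_eq0 norm2_eq0 (negPf y0).
  by rewrite andbF.
have S0 : S !=set0.
  exists (norm2 (E t *m const_mx 1) ^+ m / norm2 (const_mx 1 : 'cV[R]_d) ^+ m).
  apply: pure_in_S; apply/negP => /eqP /matrixP /(_ k0 0).
  by rewrite !mxE; apply/eqP/oner_neq0.
have supS : has_sup S by split => //; exists (opnorm (E t) ^+ m).
have supS_ge0 : 0 <= sup S.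
  by have [r Sr] := S0; exact: le_trans (S_ge0 _ Sr) (sup_upper_bound supS Sr).
apply/eqP; rewrite eq_le ge_sup //=; apply: opnorm_expn_le => // x x1.
have [->|x0] := eqVneq x 0; first by rewrite mulmx0 norm20 expr0n gtn_eqF.
apply: le_trans (sup_upper_bound supS (pure_in_S _ x0)).
have nx_gt0 : 0 < norm2 x ^+ m by rewrite exprn_gt0 // lt_def norm2_eq0 x0 norm2_ge0.
by rewrite ler_pdivlMr // ler_piMr ?exprn_ge0 ?norm2_ge0 // exprn_ile1 ?norm2_ge0.
Qed.

End Propagator.

Theorem theorem6p1 (R : realType) (d : nat) (C : 'M[R]_d) :
  (0 < d)%N -> conditionA C ->
  let h := fun t : R => opnorm (expmx (- (t *: C))) in
  forall m : nat, (0 < m)%N ->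
    (forall D : R -> tensor R d m, tensor_ode_solution C D ->
       forall t : R, 0 <= t -> frob (D t) <= h t ^+ m * frob (D 0))
    /\
    (forall t : R, 0 <= t ->
       sup [set frob (D t) / frob (D 0) | D in
              [set D : R -> tensor R d m | tensor_ode_solution C D /\ D 0 <> (fun _ => 0)]]
       = h t ^+ m).
Proof.
move=> d_gt0 [psdC _] h m m_gt0; pose k0 : 'I_d := Ordinal d_gt0.
split => [D HD t t0|t t0]; first exact: frob_tensor_ode_le k0 psdC D t HD t0.
exact: sup_tensor_ode_ratio k0 psdC m_gt0 t t0.
Qed.
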